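(* Let $S$ be a regular ordered semigroup and $\mathcal{B}(S)$ its semigroup of bi-ideals. Let $\mathscr{L}_{\mathcal{B}(S)}$ be the Green's $\mathscr{L}$-relation of the semigroup $(\mathcal{B}(S),* )$ and let $\mathscr{L}'$ be the relation on $\mathcal{B}(S)$ given by: $A\,\mathscr{L}'\,B$ iff for each $a\in A$ there is $b\in B$ with $a\,\mathscr{L}_S\,b$ and for each $b\in B$ there is $a\in A$ with $a\,\mathscr{L}_S\,b$. Then $\mathscr{L}_{\mathcal{B}(S)}\subseteq\mathscr{L}'$.
   Context: An ordered semigroup $(S,\cdot,\leq)$ is a semigroup with a compatible partial order. For $A\subseteq S$, $(A]=\{x\in S: x\leq a\text{ for some }a\in A\}$. $S$ is regular if for each $a\in S$ there is $x\in S$ with $a\leq axa$. A nonempty $A\subseteq S$ is a bi-ideal if $ASA\subseteq A$ and $(A]=A$; $\mathcal{B}(S)$ is the set of bi-ideals with operation $A*B=(AB]$. $\mathscr{L}_S$ is the Green's relation on the ordered semigroup $S$: $a\,\mathscr{L}_S\,b$ iff $(a\cup Sa]=(b\cup Sb]$. $\mathscr{L}_{\mathcal{B}(S)}$ is the usual Green's $\mathscr{L}$-relation of the (unordered) semigroup $(\mathcal{B}(S),* )$. *)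

Record OrderedSemigroup := {
  carrier :> Type;
  mul : carrier -> carrier -> carrier;
  le : carrier -> carrier -> Prop;
  mul_assoc : forall a b c, mul (mul a b) c = mul a (mul b c);
  le_refl : forall a, le a a;
  le_antisym : forall a b, le a b -> le b a -> a = b;
  le_trans : forall a b c, le a b -> le b c -> le a c;
  le_mul_r : forall a b c, le a b -> le (mul a c) (mul b c);
  le_mul_l : forall a b c, le a b -> le (mul c a) (mul c b)
}.

Arguments mul {_}.
Arguments le {_}.

Definition subset (S : OrderedSemigroup) := S -> Prop.

Definition seteq {S : OrderedSemigroup} (A B : subset S) : Prop :=
  forall x, A x <-> B x.

Definition down {S : OrderedSemigroup} (A : subset S) : subset S :=
  fun x => exists a, A a /\ le x a.

Definition regular (S : OrderedSemigroup) : Prop :=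
  forall a : S, exists x : S, le a (mul (mul a x) a).

Definition bi_ideal {S : OrderedSemigroup} (A : subset S) : Prop :=
  (exists a, A a) /\
  (forall a s b, A a -> A b -> A (mul (mul a s) b)) /\
  seteq (down A) A.

Definition bmul {S : OrderedSemigroup} (A B : subset S) : subset S :=
  down (fun x => exists a b, A a /\ B b /\ x = mul a b).

Definition left_principal {S : OrderedSemigroup} (a : S) : subset S :=
  down (fun y => y = a \/ exists s, y = mul s a).

Definition L_S {S : OrderedSemigroup} (a b : S) : Prop :=
  seteq (left_principal a) (left_principal b).

(* Elements of B(S) are
   bi-ideals, identified up to extensional equality.  The principal left ideal
   B(S)^1 * A = {A} ∪ B(S) * A, as a set of bi-ideals: *)
Definition B_left_principal {S : OrderedSemigroup} (A : subset S)
  : subset S -> Prop :=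
  fun C => seteq C A \/ exists X, bi_ideal X /\ seteq C (bmul X A).

Definition L_B {S : OrderedSemigroup} (A B : subset S) : Prop :=
  forall C, bi_ideal C -> (B_left_principal A C <-> B_left_principal B C).

Definition L' {S : OrderedSemigroup} (A B : subset S) : Prop :=
  (forall a, A a -> exists b, B b /\ L_S a b) /\
  (forall b, B b -> exists a, A a /\ L_S a b).


(* If A L B in B(S), then A lies in the principal left ideal B(S)^1 * B, so A = B or
   A = (XB].  In the second case each a in A satisfies a <= x b with b in B; choosing
   u with a <= a u a, the element b u a lies in B (it is below b (u a u x) b) and in Sa,
   while a <= x (b u a).  Hence a L_S b u a; the other inclusion is symmetric. *)

Section LeftPrincipal.

Variable S : OrderedSemigroup.

Lemma left_principal_mul (s a : S) : left_principal a (mul s a).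
Proof. exists (mul s a). split; [right; exists s; reflexivity | apply le_refl]. Qed.

Lemma left_principal_le (a y z : S) :
  le z y -> left_principal a y -> left_principal a z.
Proof.
  intros Hzy [w [Hw Hyw]]. exists w. split; [exact Hw | eapply le_trans; eauto].
Qed.

Lemma left_principal_subset (a b : S) :
  left_principal b a -> forall z, left_principal a z -> left_principal b z.
Proof.
  intros Hab z [y [[-> | [t ->]] Hzy]]; apply (left_principal_le _ _ _ Hzy).
  - exact Hab.
  - destruct Hab as [w [[-> | [s ->]] Haw]].
    + apply left_principal_le with (mul t b);
        [apply le_mul_l; exact Haw | apply left_principal_mul].
    + apply left_principal_le with (mul (mul t s) b).
      * rewrite mul_assoc. apply le_mul_l. exact Haw.
      * apply left_principal_mul.
Qed.

Lemma L_S_intro (a b : S) :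
  left_principal b a -> left_principal a b -> L_S a b.
Proof. intros Hab Hba z; split; apply left_principal_subset; assumption. Qed.

Lemma L_S_refl (a : S) : L_S a a.
Proof. intro z; tauto. Qed.

Lemma L_S_sym (a b : S) : L_S a b -> L_S b a.
Proof. intros Hab z. specialize (Hab z). tauto. Qed.

End LeftPrincipal.

Section Regular.

Variable S : OrderedSemigroup.
Hypothesis HS : regular S.

Lemma regular_L_S_below_left_multiple (B : subset S) (HB : bi_ideal B) (a x b : S) :
  B b -> le a (mul x b) -> exists b', B b' /\ L_S a b'.
Proof.
  intros Hb Hle.
  destruct (HS a) as [u Hu].
  destruct HB as [_ [HBmul HBdown]].
  exists (mul (mul b u) a). split.
  - apply HBdown. exists (mul (mul b (mul (mul u a) (mul u x))) b).
    split; [apply HBmul; assumption |].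
    apply le_trans with (mul (mul b u) (mul (mul a u) (mul x b))).
    + apply le_mul_l. apply le_trans with (mul (mul a u) a);
        [exact Hu | apply le_mul_l; exact Hle].
    + repeat rewrite mul_assoc. apply le_refl.
  - apply L_S_intro.
    + apply left_principal_le with (mul x (mul (mul b u) a));
        [| apply left_principal_mul].
      apply le_trans with (mul (mul (mul x b) u) a).
      * eapply le_trans; [exact Hu | apply le_mul_r, le_mul_r; exact Hle].
      * repeat rewrite mul_assoc. apply le_refl.
    + apply left_principal_mul.
Qed.

Lemma bmul_L_S (X B : subset S) (HB : bi_ideal B) (a : S) :
  bmul X B a -> exists b, B b /\ L_S a b.
Proof.
  intros [y [[x [b [_ [Hb ->]]]] Hle]].
  exact (regular_L_S_below_left_multiple B HB a x b Hb Hle).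
Qed.

Lemma B_left_principal_L_S (A B : subset S) (HB : bi_ideal B) :
  B_left_principal B A -> forall a, A a -> exists b, B b /\ L_S a b.
Proof.
  intros [HAB | [X [_ HAXB]]] a Ha.
  - exists a. split; [apply HAB; exact Ha | apply L_S_refl].
  - apply (bmul_L_S X B HB), HAXB, Ha.
Qed.

End Regular.

Lemma B_left_principal_self (S : OrderedSemigroup) (A : subset S) :
  B_left_principal A A.
Proof. left. intro; tauto. Qed.

Theorem mainTheorem3 (S : OrderedSemigroup) (HS : regular S)
  (A B : subset S) (HA : bi_ideal A) (HB : bi_ideal B) :
  L_B A B -> L' A B.
Proof.
  intros HL. split.
  - apply (B_left_principal_L_S S HS A B HB).
    apply (HL A HA), B_left_principal_self.
  - intros b Hb.
    assert (HBA : B_left_principal A B) by apply (HL B HB), B_left_principal_self.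
    destruct (B_left_principal_L_S S HS B A HA HBA b Hb) as [a [Ha Hba]].
    exists a. split; [exact Ha | apply L_S_sym, Hba].
Qed.
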